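(* Let $1\le d<n$, $r=d(n-d)$, and let $\mathfrak C:\underline i_r>\underline i_{r-1}>\cdots>\underline i_0$ be a maximal chain in $I(d,n)$. Then there exists $0\le k<r$ such that $\underline i_h$ does not contain $n$ for all $h\le k$ and $\underline i_h$ contains $n$ for all $h>k$. Moreover, if $\underline i_k=i_{1,k}i_{2,k}\cdots i_{d,k}$, then $i_{d,k}=n-1$ and $\underline i_{k+1}=i_{1,k}\cdots i_{d-1,k}\,n$.
   Context: $I(d,n)$ is the set of $d$-element subsets of $\{1,\dots,n\}$, written as increasing sequences $i_1i_2\cdots i_d$, partially ordered by $\underline i\le \underline j$ iff $i_k\le j_k$ for all $k$. A maximal chain is a totally ordered subset maximal with respect to inclusion; it has the form $\underline i_r>\cdots>\underline i_0$ with $\underline i_0=12\cdots d$, $\underline i_r=(n-d+1)\cdots n$, each relation a cover. *)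

From mathcomp Require Import all_boot.
Set Implicit Arguments. Unset Strict Implicit. Unset Printing Implicit Defensive.

(* Elements of I(d,n): d-element subsets of {1,...,n}, represented as subsets of
   'I_n.+1 = {0,...,n} not containing 0 (so numbering is literal). *)
Definition Idn (d n : nat) : {set {set 'I_n.+1}} :=
  [set A : {set 'I_n.+1} | (#|A| == d) && (ord0 \notin A)].

Arguments Idn : clear implicits.

Definition seqI (n : nat) (A : {set 'I_n.+1}) : seq nat :=
  sort leq [seq val x | x in A].

Definition leI (n : nat) (A B : {set 'I_n.+1}) : bool :=
  all2 leq (seqI A) (seqI B).

Definition ltI (n : nat) (A B : {set 'I_n.+1}) : bool :=
  (A != B) && leI A B.

Definition is_chain (d n : nat) (C : {set {set 'I_n.+1}}) : Prop :=
  C \subset Idn d n /\ (forall A B, A \in C -> B \in C -> leI A B || leI B A).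

Arguments is_chain : clear implicits.

Definition maximal_chain (d n : nat) (C : {set {set 'I_n.+1}}) : Prop :=
  is_chain d n C /\
  (forall C', is_chain d n C' -> C \subset C' -> C' = C).
Arguments maximal_chain : clear implicits.

From mathcomp Require Import all_boot zify.
Set Implicit Arguments. Unset Strict Implicit.

(* The sum of the entries of i_1 i_2 ... i_d is a rank function for the order
   on I(d,n): a strict relation raises it, and it ranges from its value at
   12...d to that value plus d(n-d) at (n-d+1)...n.  A strict chain with
   r = d(n-d) steps inside I(d,n) must therefore raise it by exactly one at
   every step (only this length, not maximality, is needed).  Containing n
   means i_d = n, an upward closed condition, so it switches on at a single
   step k -> k+1; there i_d changes while the sum rises by one and no entry
   decreases, so i_d goes from n-1 to n and the other entries stay put. *)

Lemma all2_nth (S T : Type) (r : S -> T -> bool) x0 y0 s t i :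
  all2 r s t -> i < size s -> r (nth x0 s i) (nth y0 t i).
Proof.
elim: s t i => [|x s IHs] [|y t] [|i] //= /andP[r_xy /IHs r_st] //.
exact: r_st.
Qed.

Lemma all2_rcons (S T : Type) (r : S -> T -> bool) s t x y :
  all2 r (rcons s x) (rcons t y) = all2 r s t && r x y.
Proof.
elim: s t => [|x' s IHs] [|y' t] /=; rewrite ?andbT //.
- by case: t => [|? ?]; rewrite /= andbF.
- by case: s {IHs} => [|? ?]; rewrite /= andbF.
- by rewrite IHs andbA.
Qed.

Lemma all2_leq_sumn (s t : seq nat) :
  all2 leq s t -> sumn s <= sumn t ?= iff (s == t).
Proof.
elim: s t => [|x s IHs] [|y t] //= /andP[le_xy /IHs le_st].
by rewrite eqseq_cons; apply: leqif_add => //; apply: leqif_eq.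
Qed.

Lemma all2_leq_rcons_sumnS (s t : seq nat) a b :
  all2 leq (rcons s a) (rcons t b) ->
  sumn (rcons t b) = (sumn (rcons s a)).+1 ->
  a != b -> t = s /\ b = a.+1.
Proof.
rewrite all2_rcons !sumn_rcons => /andP[le_st le_ab] sum_tb ne_ab.
have [le_sum eq_sum] := all2_leq_sumn le_st.
have sum_st : sumn s = sumn t by lia.
by split; [apply/esym/eqP; rewrite -eq_sum sum_st | lia].
Qed.

Lemma sorted_ltn_iota_leq m (s : seq nat) :
  sorted ltn s -> all (leq m) s -> all2 leq (iota m (size s)) s.
Proof.
elim: s m => [|x s IHs] m //= x_s /andP[le_mx _]; rewrite le_mx /=.
apply: IHs; first exact: path_sorted x_s.
by apply: sub_all (order_path_min ltn_trans x_s) => y; apply: leq_ltn_trans.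
Qed.

Lemma sorted_ltn_leq_iota m (s : seq nat) :
  sorted ltn s -> all (fun x => x < m + size s) s ->
  all2 leq s (iota m (size s)).
Proof.
elim: s m => [|x s IHs] m //= x_s /andP[lt_x lt_s].
have le_s : all2 leq s (iota m.+1 (size s)).
  by apply: IHs; [exact: path_sorted x_s | rewrite addSnnS].
rewrite le_s andbT.
case: s x_s lt_x le_s {IHs lt_s} => [|y s] /=; first by rewrite addn1.
by case/andP=> lt_xy _ _ /andP[le_y _]; lia.
Qed.

Lemma sumn_iotaDl k m d : sumn (iota (k + m) d) = d * k + sumn (iota m d).
Proof. by elim: d m => [|d IHd] m //=; rewrite -addnS IHd /=; lia. Qed.

Section StrictlyIncreasing.

Variables (f : nat -> nat) (r : nat).
Hypothesis f_incr : forall h, h < r -> f h < f h.+1.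

Lemma incr_leq_addn i j : i <= j <= r -> f i + (j - i) <= f j.
Proof.
elim: j => [|j IHj] /andP[le_ij le_jr]; first by have -> : i = 0; lia.
have [-> | lt_ij] := eqVneq i j.+1; first by rewrite subnn addn0.
have := f_incr le_jr; have := IHj ltac:(lia); lia.
Qed.

Lemma incr_unit_steps : f r <= f 0 + r -> forall h, h <= r -> f h = f 0 + h.
Proof.
move=> le_fr h le_hr.
have := @incr_leq_addn 0 h le_hr; have := @incr_leq_addn h r ltac:(lia); lia.
Qed.

End StrictlyIncreasing.

Lemma upclosed_threshold (P : pred nat) r :
  ~~ P 0 -> P r -> (forall h, h < r -> P h -> P h.+1) ->
  exists2 k, k < r & forall h, h <= r -> P h = (k < h).
Proof.
move=> P0 Pr P_up.
have P_upto i j : i <= j <= r -> P i -> P j.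
  elim: j => [|j IHj] /andP[le_ij le_jr]; first by have -> : i = 0; lia.
  have [-> // | ne_ij] := eqVneq i j.+1.
  by move=> Pi; apply: P_up => //; apply: IHj; lia.
case: (ex_minnP (ex_intro P r Pr)) => m Pm min_m.
have m_gt0 : 0 < m by case: m Pm {min_m} => // P0'; rewrite P0' in P0.
exists m.-1 => [|h le_hr]; first by have := min_m _ Pr; lia.
apply/idP/idP => [/min_m | lt_h]; first lia.
by apply: (P_upto m); first lia.
Qed.

Section SubsetSequences.

Variable n : nat.
Implicit Types A B : {set 'I_n.+1}.

Lemma seqI_mem A (x : 'I_n.+1) : (val x \in seqI A) = (x \in A).
Proof. by rewrite /seqI mem_sort /image_mem (mem_map val_inj) mem_enum. Qed.

Lemma seqI_inj : injective (@seqI n).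
Proof. by move=> A B eq_AB; apply/setP=> x; rewrite -!seqI_mem eq_AB. Qed.

Lemma size_seqI A : size (seqI A) = #|A|.
Proof. by rewrite /seqI size_sort size_image. Qed.

Lemma sorted_seqI A : sorted ltn (seqI A).
Proof.
rewrite ltn_sorted_uniq_leq sort_uniq sort_sorted ?andbT; last exact: leq_total.
by rewrite /image_mem (map_inj_uniq val_inj) enum_uniq.
Qed.

Lemma seqI_ltn A : all (fun x => x < n.+1) (seqI A).
Proof.
apply/allP=> x; rewrite /seqI mem_sort /image_mem => /mapP[y _ ->].
exact: ltn_ord.
Qed.

Lemma seqI_gt0 A : ord0 \notin A -> all (leq 1) (seqI A).
Proof.
move=> A0; apply/allP=> x; rewrite /seqI mem_sort /image_mem => /mapP[y].
rewrite mem_enum lt0n => yA ->; apply: contraNneq A0 => y0.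
by rewrite -(_ : y = ord0) //; apply: val_inj.
Qed.

Lemma nth_seqI_leq A i : nth 0 (seqI A) i <= n.
Proof.
have [lt_i | le_i] := ltnP i (size (seqI A)); last by rewrite nth_default.
by have /allP := seqI_ltn A; apply; apply: mem_nth.
Qed.

Lemma ltI_sumn A B : ltI A B -> sumn (seqI A) < sumn (seqI B).
Proof.
case/andP=> ne_AB le_AB; have [le_sum eq_sum] := all2_leq_sumn le_AB.
by rewrite ltn_neqAle le_sum eq_sum (inj_eq seqI_inj) ne_AB.
Qed.

Variable d : nat.

Lemma size_seqI_Idn A : A \in Idn d n -> size (seqI A) = d.
Proof. by rewrite inE size_seqI => /andP[/eqP]. Qed.

Lemma Idn_bottom A : A \in Idn d n -> all2 leq (iota 1 d) (seqI A).
Proof.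
rewrite inE => /andP[/eqP <- A0]; rewrite -size_seqI.
exact: sorted_ltn_iota_leq (sorted_seqI A) (seqI_gt0 A0).
Qed.

Lemma Idn_top A : d <= n -> A \in Idn d n ->
  all2 leq (seqI A) (iota (n - d).+1 d).
Proof.
rewrite inE => le_dn /andP[/eqP card_A _]; rewrite -card_A -size_seqI.
apply: sorted_ltn_leq_iota (sorted_seqI A) _.
by rewrite size_seqI card_A addSn subnK //; apply: seqI_ltn.
Qed.

Lemma Idn_mem_max A : 0 < d -> A \in Idn d n ->
  ((inord n : 'I_n.+1) \in A) = (nth 0 (seqI A) d.-1 == n).
Proof.
move=> d_gt0 /size_seqI_Idn size_A.
have lt_d : d.-1 < size (seqI A) by rewrite size_A prednK.
have mem_inord x : x <= n -> ((inord x : 'I_n.+1) \in A) = (x \in seqI A).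
  by move=> le_xn; rewrite -seqI_mem /= inordK.
rewrite mem_inord //; apply/idP/eqP => [n_A | max_n]; last first.
  by rewrite -[X in X \in _]max_n mem_nth.
have := sorted_seqI A; rewrite ltn_sorted_uniq_leq => /andP[_ sorted_leq].
have idx_n : index n (seqI A) < size (seqI A) by rewrite index_mem.
have := sorted_leq_nth leq_trans leqnn 0 sorted_leq _ _ idx_n lt_d.
by have := nth_seqI_leq A d.-1; rewrite nth_index //; lia.
Qed.

Lemma leI_mem_max A B : 0 < d -> A \in Idn d n -> B \in Idn d n -> leI A B ->
  (inord n : 'I_n.+1) \in A -> (inord n : 'I_n.+1) \in B.
Proof.
move=> d_gt0 A_Idn B_Idn le_AB; rewrite !Idn_mem_max // => /eqP max_A.
have := all2_nth 0 0 le_AB (_ : d.-1 < size (seqI A)).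
rewrite size_seqI_Idn // prednK // max_A => /(_ (leqnn d)) le_n.
by rewrite eqn_leq le_n nth_seqI_leq.
Qed.

End SubsetSequences.

Section ChainOfMaximalLength.

Variables (d n : nat) (c : nat -> {set 'I_n.+1}).
Local Notation r := (d * (n - d)).
Hypotheses (d_gt0 : 0 < d) (lt_dn : d < n).
Hypothesis c_Idn : forall h, h <= r -> c h \in Idn d n.
Hypothesis c_incr : forall h, h < r -> ltI (c h) (c h.+1).

Lemma sumn_chain h : h <= r -> sumn (seqI (c h)) = sumn (iota 1 d) + h.
Proof.
pose w h := sumn (seqI (c h)).
have w_incr i : i < r -> w i < w i.+1 by move/c_incr/ltI_sumn.
have bottom : sumn (iota 1 d) <= w 0.
  exact: (all2_leq_sumn (Idn_bottom (c_Idn (leq0n r)))).1.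
have top : w r <= sumn (iota 1 d) + r.
  have := (all2_leq_sumn (Idn_top (ltnW lt_dn) (c_Idn (leqnn r)))).1.
  by rewrite -[(n - d).+1]addn1 sumn_iotaDl addnC.
have rise : w 0 + r <= w r.
  by have := incr_leq_addn w_incr (leqnn r : 0 <= r <= r); rewrite subn0.
have tight : w r <= w 0 + r by lia.
move=> le_hr; change (w h = sumn (iota 1 d) + h).
by rewrite (incr_unit_steps w_incr tight le_hr); lia.
Qed.

Lemma chain_bottom : seqI (c 0) = iota 1 d.
Proof.
have [_ eq_sum] := all2_leq_sumn (Idn_bottom (c_Idn (leq0n r))).
by apply/esym/eqP; rewrite -eq_sum sumn_chain ?addn0.
Qed.

Lemma chain_top : seqI (c r) = iota (n - d).+1 d.
Proof.
have [_ eq_sum] := all2_leq_sumn (Idn_top (ltnW lt_dn) (c_Idn (leqnn r))).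
apply/eqP; rewrite -eq_sum sumn_chain //.
by rewrite -[(n - d).+1]addn1 sumn_iotaDl addnC.
Qed.

Lemma chain_mem_max_threshold :
  exists2 k, k < r &
    forall h, h <= r -> ((inord n : 'I_n.+1) \in c h) = (k < h).
Proof.
apply: upclosed_threshold => [|| h lt_hr].
- rewrite (Idn_mem_max d_gt0 (c_Idn (leq0n r))) chain_bottom.
  by rewrite nth_iota ?prednK //; lia.
- rewrite (Idn_mem_max d_gt0 (c_Idn (leqnn r))) chain_top.
  by rewrite nth_iota ?prednK //; lia.
- case/andP: (c_incr lt_hr) => _.
  exact: leI_mem_max d_gt0 (c_Idn (ltnW lt_hr)) (c_Idn lt_hr).
Qed.

Lemma chain_step_max k : k < r ->
  (inord n : 'I_n.+1) \notin c k -> (inord n : 'I_n.+1) \in c k.+1 ->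
  nth 0 (seqI (c k)) d.-1 = n.-1 /\
  seqI (c k.+1) = rcons (take d.-1 (seqI (c k))) n.
Proof.
move=> lt_kr; have le_kr := ltnW lt_kr.
rewrite (Idn_mem_max d_gt0 (c_Idn le_kr)) (Idn_mem_max d_gt0 (c_Idn lt_kr)).
move=> ne_max /eqP max_n.
have split_last h : h <= r ->
    seqI (c h) = rcons (take d.-1 (seqI (c h))) (nth 0 (seqI (c h)) d.-1).
  move=> le_hr; have size_c := size_seqI_Idn (c_Idn le_hr).
  by rewrite -take_nth ?prednK ?take_oversize ?size_c.
have [eq_take eq_max] :
    take d.-1 (seqI (c k.+1)) = take d.-1 (seqI (c k)) /\
    nth 0 (seqI (c k.+1)) d.-1 = (nth 0 (seqI (c k)) d.-1).+1.
  apply: all2_leq_rcons_sumnS; rewrite -?split_last //.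
  - by case/andP: (c_incr lt_kr).
  - by rewrite !sumn_chain // addnS.
  - by rewrite max_n.
by split; [lia | rewrite split_last // eq_take max_n].
Qed.

End ChainOfMaximalLength.

Theorem proposition2p8 (d n : nat) (hd : 1 <= d) (hdn : d < n)
  (c : nat -> {set 'I_n.+1})
  (hdec : forall h, h < d * (n - d) -> ltI (c h) (c h.+1))
  (hmax : maximal_chain d n [set c (val h) | h : 'I_(d * (n - d)).+1]) :
  exists k, [/\ k < d * (n - d),
    (forall h, h <= k -> (inord n : 'I_n.+1) \notin c h),
    (forall h, k < h <= d * (n - d) -> (inord n : 'I_n.+1) \in c h),
    nth 0 (seqI (c k)) d.-1 = n.-1 &
    seqI (c k.+1) = rcons (take d.-1 (seqI (c k))) n].
Proof.
have c_Idn h : h <= d * (n - d) -> c h \in Idn d n.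
  case: hmax => [[sub_Idn _] _] le_h; apply: (subsetP sub_Idn).
  by apply/imsetP; exists (Ordinal (le_h : h < (d * (n - d)).+1)).
have [k lt_k mem_max] := chain_mem_max_threshold hd hdn c_Idn hdec.
have notin_k : (inord n : 'I_n.+1) \notin c k by rewrite mem_max ?ltnn // ltnW.
have in_k1 : (inord n : 'I_n.+1) \in c k.+1 by rewrite mem_max.
have [max_k step_k] := chain_step_max hd hdn c_Idn hdec lt_k notin_k in_k1.
exists k; split=> // [h le_hk | h /andP[lt_kh le_h]]; last by rewrite mem_max.
by rewrite mem_max -?leqNgt //; apply: leq_trans le_hk (ltnW lt_k).
Qed.
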